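(* Let $\mathcal{H}$ and $\mathcal{K}$ be finite-dimensional complex Hilbert spaces, and let $\mathcal{HP}$ be the set of all Hermitian-preserving trace-preserving linear maps $B(\mathcal{H})\to B(\mathcal{K})$, with the topology induced by any norm. Let $\mathcal{SP}\subseteq\mathcal{HP}$ and $\mathcal{SN}\subseteq\mathcal{HP}$ be the subsets of SP maps and SN maps respectively. Then, with interior and closure taken in $\mathcal{HP}$, $$\operatorname{int}(\mathcal{SN})=\mathcal{SP}\quad\text{and}\quad \overline{\mathcal{SP}}=\mathcal{SN}.$$
   Context: $B(\mathcal{H})$ denotes all linear operators on $\mathcal{H}$; a density matrix is a positive semidefinite operator of trace one. A map is Hermitian-preserving if $\Psi(X^\dagger)=\Psi(X)^\dagger$ and trace-preserving if $\operatorname{Tr}\Psi(X)=\operatorname{Tr}X$. An HPTP map $\Psi$ is SP (semi-positive) if there is an invertible density matrix $\rho\in B(\mathcal{H})$ such that $\Psi(\rho)$ is an invertible density matrix; it is SN (semi-nonnegative) if there is a density matrix $\rho$ such that $\Psi(\rho)$ is a density matrix. *)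

From HB Require Import structures.
From mathcomp Require Import all_boot all_order all_algebra.
From mathcomp Require Import reals.
From mathcomp Require Import complex.
Set Implicit Arguments. Unset Strict Implicit. Unset Printing Implicit Defensive.
Import Order.TTheory GRing.Theory Num.Theory.
Local Open Scope ring_scope.

Section Defs.
Variable R : realType.
Local Notation C := (R[i]).

Definition adj {p q : nat} (A : 'M[C]_(p, q)) : 'M[C]_(q, p) :=
  (map_mx Num.conj A)^T.

Definition psd {p : nat} (A : 'M[C]_p) : Prop :=
  adj A = A /\ forall v : 'cV[C]_p, 0 <= (adj v *m A *m v) 0 0.

Definition density {p : nat} (A : 'M[C]_p) : Prop := psd A /\ \tr A = 1.

Definition hermitian_preserving {n m : nat} (Psi : {linear 'M[C]_n -> 'M[C]_m}) :=
  forall X : 'M[C]_n, Psi (adj X) = adj (Psi X).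

Definition trace_preserving {n m : nat} (Psi : {linear 'M[C]_n -> 'M[C]_m}) :=
  forall X : 'M[C]_n, \tr (Psi X) = \tr X.

Definition HP {n m : nat} (Psi : {linear 'M[C]_n -> 'M[C]_m}) : Prop :=
  hermitian_preserving Psi /\ trace_preserving Psi.

Definition SP {n m : nat} (Psi : {linear 'M[C]_n -> 'M[C]_m}) : Prop :=
  HP Psi /\ exists rho : 'M[C]_n,
    [/\ density rho, rho \in unitmx, density (Psi rho) & Psi rho \in unitmx].

Definition SN {n m : nat} (Psi : {linear 'M[C]_n -> 'M[C]_m}) : Prop :=
  HP Psi /\ exists rho : 'M[C]_n, density rho /\ density (Psi rho).

(* The (open) ball of radius eps around Psi for the sup-norm of the coefficients
   of the maps in the matrix-unit basis: this norm induces the (unique) norm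
   topology on the finite-dimensional space of linear maps. *)
Definition near_map {n m : nat} (eps : R) (Psi Phi : {linear 'M[C]_n -> 'M[C]_m}) :=
  forall (i j : 'I_n) (k l : 'I_m),
    `|Phi (delta_mx i j) k l - Psi (delta_mx i j) k l| < (eps%:C)%C.

Definition interior_HP {n m : nat} (S : {linear 'M[C]_n -> 'M[C]_m} -> Prop)
  (Psi : {linear 'M[C]_n -> 'M[C]_m}) : Prop :=
  HP Psi /\ S Psi /\ exists eps : R, 0 < eps /\
    forall Phi, HP Phi -> near_map eps Psi Phi -> S Phi.

Definition closure_HP {n m : nat} (S : {linear 'M[C]_n -> 'M[C]_m} -> Prop)
  (Psi : {linear 'M[C]_n -> 'M[C]_m}) : Prop :=
  HP Psi /\ forall eps : R, 0 < eps ->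
    exists Phi, S Phi /\ HP Phi /\ near_map eps Psi Phi.

End Defs.

From Pilot Require Import Defs.
From HB Require Import structures.
From mathcomp Require Import all_boot all_order all_algebra.
From mathcomp Require Import interval_inference reals complex.
From mathcomp Require Import all_classical topology normedtype sequences.
From mathcomp Require Import ring lra.
Import Order.TTheory GRing.Theory Num.Theory numFieldNormedType.Exports Normc.
Set Implicit Arguments. Unset Strict Implicit. Unset Printing Implicit Defensive.
Local Open Scope ring_scope.
(* The [%:C] of complex_scope, which stays closed: its [x^*] is [conjc], not [Num.conj]. *)
Local Notation "a %:C" := (real_complex _ a) : ring_scope.

(* If Psi(rho) is positive definite, Cauchy-Schwarz for the form of Psi(rho)^-1 gives
   |v|^2 <= K <v, Psi(rho) v>, so every Hermitian perturbation of Psi(rho) that is small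
   in the entrywise l1-norm is still positive semidefinite: SP maps are interior to SN.
   Conversely, let T_s(P) = (P + s 1/dim) / (1 + s) and D = Psi(1)/n - 1/m. As D is Hermitian
   and traceless, Psi_c(X) = Psi(X) + c tr(X) D is HPTP and close to Psi for small c, and on
   trace-one matrices Psi o T_s = T_s o Psi_s and Psi_c o T_s = T_s o Psi for c = -s/(1+s).
   Since T_s maps densities to invertible densities, SN witnesses for Psi_s (resp. Psi)
   become SP witnesses for Psi (resp. Psi_c): this gives int SN <= SP and SN <= cl SP.
   Finally densities have entries of modulus at most 1, so the witnesses rho_k of SP maps
   Phi_k -> Psi have a cluster point L (Bolzano-Weierstrass); L and Psi(L) are then limits
   of densities, hence densities: cl SP <= SN. *)

Section ComplexModulus.
Variable R : realType.
Implicit Types (x y : R[i]) (a : R).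

Lemma normcE x : `|x| = (normc x)%:C.
Proof. by case: x. Qed.

Lemma normc_ge0 x : 0 <= normc x.
Proof. by case: x => a b; exact: sqrtr_ge0. Qed.

Lemma normcJ x : normc x^* = normc x.
Proof. by case: x => a b; rewrite /normc /= sqrrN. Qed.

Lemma normc_real a : normc a%:C = `|a|.
Proof. by rewrite /normc /= expr0n /= addr0 sqrtr_sqr. Qed.

Lemma conjC_realc a : a%:C^* = a%:C.
Proof. exact: conjc_real. Qed.

Lemma normc_sum (I : Type) (r : seq I) (P : pred I) (F : I -> R[i]) :
  normc (\sum_(i <- r | P i) F i) <= \sum_(i <- r | P i) normc (F i).
Proof.
by rewrite -lecR rmorph_sum -normcE (le_trans (ler_norm_sum _ _ _)).
Qed.

Lemma Re_le_normc x : `|complex.Re x| <= normc x.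
Proof. by case: x => a b; rewrite /normc /= -sqrtr_sqr ler_wsqrtr // lerDl sqr_ge0. Qed.

Lemma Im_le_normc x : `|complex.Im x| <= normc x.
Proof. by case: x => a b; rewrite /normc /= -sqrtr_sqr ler_wsqrtr // lerDr sqr_ge0. Qed.

Lemma normc_le_ReIm x : normc x <= `|complex.Re x| + `|complex.Im x|.
Proof.
case: x => a b; rewrite /normc /= -[X in _ <= X]ger0_norm ?addr_ge0 //.
rewrite -sqrtr_sqr ler_wsqrtr // sqrrD !real_normK ?num_real //.
have := mulr_ge0 (normr_ge0 a) (normr_ge0 b); lra.
Qed.

End ComplexModulus.

Section Adjoint.
Variable R : realType.
Local Notation C := R[i].

Lemma adjE p q (A : 'M[C]_(p, q)) i j : adj A i j = (A j i)^*.
Proof. by rewrite !mxE. Qed.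

Lemma adjK p q (A : 'M[C]_(p, q)) : adj (adj A) = A.
Proof. by apply/matrixP => i j; rewrite !adjE conjCK. Qed.

Lemma adjD p q (A B : 'M[C]_(p, q)) : adj (A + B) = adj A + adj B.
Proof. by apply/matrixP => i j; rewrite !mxE rmorphD. Qed.

Lemma adjN p q (A : 'M[C]_(p, q)) : adj (- A) = - adj A.
Proof. by apply/matrixP => i j; rewrite !mxE rmorphN. Qed.

Lemma adjZ p q c (A : 'M[C]_(p, q)) : adj (c *: A) = c^* *: adj A.
Proof. by apply/matrixP => i j; rewrite !mxE rmorphM. Qed.

Lemma adjM p q r (A : 'M[C]_(p, q)) (B : 'M[C]_(q, r)) :
  adj (A *m B) = adj B *m adj A.
Proof.
apply/matrixP => i j; rewrite !mxE rmorph_sum; apply: eq_bigr => k _.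
by rewrite !mxE rmorphM mulrC.
Qed.

Lemma adj_scalar n (c : C) : adj (c%:M : 'M[C]_n) = c^*%:M.
Proof. by apply/matrixP => i j; rewrite !mxE eq_sym rmorphMn. Qed.

Lemma adj_delta p q i j : adj (delta_mx i j : 'M[C]_(p, q)) = delta_mx j i.
Proof. by apply/matrixP => a b; rewrite !mxE conjC_nat andbC. Qed.

Lemma mxtrace_adj n (A : 'M[C]_n) : \tr (adj A) = (\tr A)^*.
Proof. by rewrite /mxtrace rmorph_sum; apply: eq_bigr => i _; rewrite !mxE. Qed.

Lemma adj_invmx n (A : 'M[C]_n) : adj (invmx A) = invmx (adj A).
Proof. by rewrite /adj map_invmx trmx_inv. Qed.

End Adjoint.

Section SesquilinearForm.
Variable R : realType.
Local Notation C := R[i].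
Implicit Types (a : R) (z : C).

Lemma ReD z1 z2 : complex.Re (z1 + z2) = complex.Re z1 + complex.Re z2.
Proof. by case: z1; case: z2. Qed.

Lemma Re_ge0 z : 0 <= z -> 0 <= complex.Re z.
Proof. by rewrite lecE => /andP[]. Qed.

Lemma ReM_real a z : complex.Re (a%:C * z) = a * complex.Re z.
Proof. by case: z => x y /=; rewrite mul0r subr0. Qed.

Lemma conjCM_normc z : z^* * z = (normc z ^+ 2)%:C.
Proof. by rewrite mulrC -normCK normcE rmorphXn. Qed.

Variable n : nat.
Implicit Types (A B : 'M[C]_n) (x y v : 'cV[C]_n).

Definition sform A x y := (adj x *m A *m y) 0 0.

Definition vnorm2 v := \sum_i normc (v i 0) ^+ 2.

Lemma sformE A x y : sform A x y = \sum_i \sum_j (x i 0)^* * A i j * y j 0.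
Proof.
rewrite /sform mxE exchange_big; apply: eq_bigr => j _.
by rewrite mxE mulr_suml; apply: eq_bigr => i _; rewrite adjE.
Qed.

Lemma sformDl A x y v : sform A (x + y) v = sform A x v + sform A y v.
Proof. by rewrite /sform adjD !mulmxDl mxE. Qed.

Lemma sformDr A x y v : sform A v (x + y) = sform A v x + sform A v y.
Proof. by rewrite /sform mulmxDr mxE. Qed.

Lemma sformNl A x y : sform A (- x) y = - sform A x y.
Proof. by rewrite /sform adjN !mulNmx mxE. Qed.

Lemma sformNr A x y : sform A x (- y) = - sform A x y.
Proof. by rewrite /sform mulmxN mxE. Qed.

Lemma sformZl A c x y : sform A (c *: x) y = c^* * sform A x y.
Proof. by rewrite /sform adjZ -!scalemxAl mxE. Qed.

Lemma sformZr A c x y : sform A x (c *: y) = c * sform A x y.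
Proof. by rewrite /sform -scalemxAr mxE. Qed.

Lemma sform_mxD A B x y : sform (A + B) x y = sform A x y + sform B x y.
Proof. by rewrite /sform mulmxDr mulmxDl mxE. Qed.

Lemma sform_mxZ A c x y : sform (c *: A) x y = c * sform A x y.
Proof. by rewrite /sform -scalemxAr -scalemxAl mxE. Qed.

Lemma sform_delta A i j : sform A (delta_mx i 0) (delta_mx j 0) = A i j.
Proof. by rewrite /sform adj_delta -rowE -colE !mxE. Qed.

Lemma sform_conj A x y : adj A = A -> sform A y x = (sform A x y)^*.
Proof. by move=> hA; rewrite /sform -adjE !adjM adjK hA mulmxA. Qed.

Lemma sform1 v : sform 1%:M v v = (vnorm2 v)%:C.
Proof.
rewrite sformE /vnorm2 rmorph_sum; apply: eq_bigr => i _.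
rewrite (bigD1 i) //= big1 => [|j ji]; last by rewrite mxE eq_sym (negPf ji) mulr0n mulr0 mul0r.
by rewrite mxE eqxx mulr1 addr0 conjCM_normc.
Qed.

Lemma vnorm2_ge0 v : 0 <= vnorm2 v.
Proof. by apply: sumr_ge0 => i _; rewrite sqr_ge0. Qed.

Lemma normc_le_vnorm2 v i : normc (v i 0) ^+ 2 <= vnorm2 v.
Proof. by rewrite /vnorm2 (bigD1 i) //= lerDl; apply: sumr_ge0 => j _; rewrite sqr_ge0. Qed.

Lemma vnorm2_eq0 v : vnorm2 v = 0 -> v = 0.
Proof.
move=> /eqP; rewrite psumr_eq0 => [/allP v0|i _]; last exact: sqr_ge0.
apply/matrixP => i j; rewrite (ord1 j) mxE; apply: eq0_normc; apply/eqP.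
by rewrite -sqrf_eq0; apply: v0; rewrite mem_index_enum.
Qed.

Lemma hermitian_sform_real A v : adj A = A -> sform A v v = (complex.Re (sform A v v))%:C.
Proof. by move=> hA; rewrite RRe_real // CrealE -sform_conj. Qed.

Lemma psdP A : adj A = A -> (forall v, 0 <= complex.Re (sform A v v)) -> psd A.
Proof. by move=> hA pA; split => // v; rewrite -/(sform _ _ _) hermitian_sform_real // ler0c. Qed.

Lemma psd_Re_ge0 A v : psd A -> 0 <= complex.Re (sform A v v).
Proof. by case=> _ /(_ v) /Re_ge0. Qed.

End SesquilinearForm.

Section PositiveSemidefinite.
Variable R : realType.
Local Notation C := R[i].
Variable n : nat.
Implicit Types (A B P : 'M[C]_n) (x y v w : 'cV[C]_n).

Lemma psdD A B : psd A -> psd B -> psd (A + B).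
Proof.
move=> hA hB; apply: psdP => [|v]; first by rewrite adjD hA.1 hB.1.
by rewrite sform_mxD ReD addr_ge0 // psd_Re_ge0.
Qed.

Lemma psdZ (a : R) A : 0 <= a -> psd A -> psd (a%:C *: A).
Proof.
move=> a0 hA; apply: psdP => [|v]; first by rewrite adjZ hA.1 conjC_realc.
by rewrite sform_mxZ ReM_real mulr_ge0 // psd_Re_ge0.
Qed.

Lemma psd1 : psd (1%:M : 'M[C]_n).
Proof. by apply: psdP => [|v]; [rewrite adj_scalar conjC1 | rewrite sform1 vnorm2_ge0]. Qed.

Lemma psd_CauchySchwarz A x y : psd A ->
  normc (sform A x y) ^+ 2 <= complex.Re (sform A x x) * complex.Re (sform A y y).
Proof.
move=> hA; set c := sform A y x; set r := complex.Re (sform A x x).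
set a := complex.Re (sform A y y); set K := normc c ^+ 2.
have cxy : sform A x y = c^* by rewrite (sform_conj y x hA.1).
have -> : normc (sform A x y) ^+ 2 = K by rewrite cxy normcJ.
have K0 : 0 <= K by rewrite sqr_ge0.
have a0 : 0 <= a by apply: psd_Re_ge0.
have Q t : 0 <= r - 2 * t * K + t ^+ 2 * K * a.
  have := psd_Re_ge0 (x - (t%:C * c) *: y) hA.
  have -> : sform A (x - (t%:C * c) *: y) (x - (t%:C * c) *: y) =
      sform A x x + (- (2 * t * K))%:C + (t ^+ 2 * K)%:C * sform A y y.
    rewrite sformDl !sformDr !sformNl !sformNr !sformZl !sformZr.
    rewrite cxy -/c rmorphM /= conjC_realc.
    rewrite rmorphN (rmorphM _ (2 * t)) (rmorphM _ 2) (rmorphM _ (t ^+ 2)) rmorphXn.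
    by rewrite /= rmorph_nat /K -conjCM_normc; ring.
  by rewrite !ReD ReM_real /= -/r -/a; lra.
have [a_gt0|a_le0] := ltrP 0 a.
  have a_neq0 := lt0r_neq0 a_gt0.
  have := Q a^-1; rewrite (_ : a^-1 ^+ 2 * K * a = a^-1 * K); last by field.
  move=> Qa; have /(mulr_ge0 (ltW a_gt0)) : 0 <= r - a^-1 * K by lra.
  by rewrite mulrBr mulrA mulfV // mul1r subr_ge0 mulrC.
have a_eq0 : a = 0 by apply/eqP; rewrite eq_le a_le0 a0.
rewrite a_eq0 mulr0 leNgt; apply/negP => K_gt0.
have K_neq0 := lt0r_neq0 K_gt0.
have := Q ((r + 1) / (2 * K)); rewrite a_eq0 mulr0 addr0.
by rewrite (_ : 2 * ((r + 1) / (2 * K)) * K = r + 1); [lra | field].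
Qed.

Lemma sform_invmx A w : adj A = A -> A \in unitmx ->
  sform (invmx A) w w = sform A (invmx A *m w) (invmx A *m w).
Proof.
move=> hA uA; rewrite /sform adjM adj_invmx hA -!mulmxA.
by rewrite [A *m (invmx A *m w)]mulmxA mulmxV // mul1mx.
Qed.

Lemma psd_invmx A : psd A -> A \in unitmx -> psd (invmx A).
Proof.
move=> hA uA; apply: psdP => [|w]; first by rewrite adj_invmx hA.1.
by rewrite sform_invmx ?hA.1 // psd_Re_ge0.
Qed.

Lemma psd_add_scalar_unit P (a : R) : psd P -> 0 < a -> P + a%:C *: 1%:M \in unitmx.
Proof.
move=> hP a0; set M := P + a%:C *: 1%:M.
have hM : psd M by apply: psdD hP (psdZ (ltW a0) psd1).
rewrite -row_free_unit; apply: inj_row_free => u uM0.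
have Mw0 : M *m adj u = 0 by rewrite -hM.1 -adjM uM0; apply/matrixP => i j; rewrite !mxE conjC0.
have : complex.Re (sform M (adj u) (adj u)) = 0 by rewrite /sform -mulmxA Mw0 mulmx0 mxE.
rewrite sform_mxD sform_mxZ sform1 ReD ReM_real /=.
have := psd_Re_ge0 (adj u) hP; have := vnorm2_ge0 (adj u) => h1 h2 h3.
have /vnorm2_eq0 u0 : vnorm2 (adj u) = 0 by nra.
by rewrite -[u]adjK u0; apply/matrixP => i j; rewrite !mxE conjC0.
Qed.

End PositiveSemidefinite.

Section EntrywiseL1Norm.
Variable R : realType.
Local Notation C := R[i].

Definition l1norm p q (A : 'M[C]_(p, q)) : R := \sum_i \sum_j normc (A i j).

Lemma l1norm_ge0 p q (A : 'M[C]_(p, q)) : 0 <= l1norm A.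
Proof. by do 2!apply: sumr_ge0 => ? _; exact: normc_ge0. Qed.

Lemma normc_le_l1norm p q (A : 'M[C]_(p, q)) i j : normc (A i j) <= l1norm A.
Proof.
rewrite /l1norm (bigD1 i) //= (bigD1 j) //= -addrA lerDl addr_ge0 //.
  by apply: sumr_ge0 => ? _; exact: normc_ge0.
by do 2!apply: sumr_ge0 => ? _; exact: normc_ge0.
Qed.

Lemma l1norm_le_entry p q (A : 'M[C]_(p, q)) (b : R) : (forall i j, normc (A i j) <= b) ->
  l1norm A <= b *+ (p * q).
Proof.
move=> hA; apply: le_trans (_ : \sum_(i < p) \sum_(j < q) b <= _).
  by do 2!apply: ler_sum => ? _; exact: hA.
by rewrite !sumr_const !card_ord -mulrnA mulnC.
Qed.

Lemma l1norm0 p q : l1norm (0 : 'M[C]_(p, q)) = 0.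
Proof. by do 2!apply: big1 => ? _; rewrite mxE normc0. Qed.

Lemma l1normD p q (A B : 'M[C]_(p, q)) : l1norm (A + B) <= l1norm A + l1norm B.
Proof.
rewrite /l1norm -big_split ler_sum // => i _; rewrite -big_split ler_sum // => j _.
by rewrite mxE le_normcD.
Qed.

Lemma l1normN p q (A : 'M[C]_(p, q)) : l1norm (- A) = l1norm A.
Proof. by do 2!apply: eq_bigr => ? _; rewrite mxE normcN. Qed.

Lemma l1normZ p q c (A : 'M[C]_(p, q)) : l1norm (c *: A) = normc c * l1norm A.
Proof.
rewrite /l1norm mulr_sumr; apply: eq_bigr => i _; rewrite mulr_sumr.
by apply: eq_bigr => j _; rewrite mxE normcM.
Qed.

Lemma l1norm_sum p q (I : Type) (r : seq I) (P : pred I) (F : I -> 'M[C]_(p, q)) :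
  l1norm (\sum_(i <- r | P i) F i) <= \sum_(i <- r | P i) l1norm (F i).
Proof.
elim/big_ind2: _ => [|x A y B hA hB|//]; first by rewrite l1norm0.
by apply: le_trans (l1normD A B) _; exact: lerD.
Qed.

Lemma l1norm_linear_le p q r s (f : {linear 'M[C]_(p, q) -> 'M[C]_(r, s)}) A :
  l1norm (f A) <= l1norm A * \sum_i \sum_j l1norm (f (delta_mx i j)).
Proof.
rewrite {1}(matrix_sum_delta A) linear_sum.
under eq_bigr do rewrite linear_sum; under eq_bigr do under eq_bigr do rewrite linearZ.
rewrite mulr_sumr; apply: le_trans (l1norm_sum _ _ _) _; apply: ler_sum => i _.
rewrite mulr_sumr; apply: le_trans (l1norm_sum _ _ _) _; apply: ler_sum => j _.
by rewrite l1normZ ler_wpM2r ?l1norm_ge0 ?normc_le_l1norm.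
Qed.

End EntrywiseL1Norm.

Section FormBounds.
Variable R : realType.
Local Notation C := R[i].
Variable n : nat.
Implicit Types (A : 'M[C]_n) (v : 'cV[C]_n).

Lemma normc_mxtrace_le A : normc (\tr A) <= l1norm A.
Proof.
apply: le_trans (normc_sum _ _ _) _; apply: ler_sum => i _.
by rewrite (bigD1 i) //= lerDl; apply: sumr_ge0 => ? _; exact: normc_ge0.
Qed.

Lemma normc_sform_le A v : normc (sform A v v) <= l1norm A * vnorm2 v.
Proof.
rewrite sformE mulr_suml; apply: le_trans (normc_sum _ _ _) _.
apply: ler_sum => i _; rewrite mulr_suml; apply: le_trans (normc_sum _ _ _) _.
apply: ler_sum => j _; rewrite !normcM normcJ.
have : normc (v i 0) * normc (v j 0) <= vnorm2 v.
  have := normc_le_vnorm2 v i; have := normc_le_vnorm2 v j.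
  have := normc_ge0 (v i 0); have := normc_ge0 (v j 0); nra.
have := normc_ge0 (A i j); nra.
Qed.

End FormBounds.

Section Densities.
Variable R : realType.
Local Notation C := R[i].

Lemma normc_small_eq0 (z : C) : (forall e, 0 < e -> normc z < e) -> z = 0.
Proof.
move=> hz; apply: eq0_normc; apply/eqP; rewrite eq_le normc_ge0 andbT.
by apply/ler_addgt0Pr => e e0; rewrite add0r ltW ?hz.
Qed.

Variable n : nat.
Implicit Types (A L P : 'M[C]_n) (v : 'cV[C]_n).

Lemma density_dim_gt0 A : density A -> (0 < n)%N.
Proof.
case: n A => // A [_]; rewrite /mxtrace big_ord0 => /eqP.
by rewrite eq_sym oner_eq0.
Qed.

Lemma density_diag A i : density A -> 0 <= A i i <= 1.
Proof.
move=> [hA trA]; have d0 k : 0 <= A k k by rewrite -sform_delta; exact: hA.2.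
rewrite d0 -trA /mxtrace (bigD1 i) //= lerDl.
by apply: sumr_ge0 => k _; exact: d0.
Qed.

Lemma density_entry_le1 A i j : density A -> normc (A i j) <= 1.
Proof.
move=> dA; have := psd_CauchySchwarz (delta_mx i 0) (delta_mx j 0) dA.1.
rewrite !sform_delta.
have /andP[/Re_ge0 i0 i1] := density_diag i dA.
have /andP[/Re_ge0 j0 j1] := density_diag j dA.
move: i1 j1; rewrite !lecE /= => /andP[_ i1] /andP[_ j1].
have := normc_ge0 (A i j); nra.
Qed.

Lemma psd_approx L :
  (forall e, 0 < e -> exists2 P, psd P & l1norm (L - P) < e) -> psd L.
Proof.
move=> hL; apply: psdP => [|v].
  apply/matrixP => i j; apply/eqP; rewrite -subr_eq0; apply/eqP.
  apply: normc_small_eq0 => e e0; have [P [hP _] LP] : exists2 P, psd P & l1norm (L - P) < e / 2.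
    by apply: hL; rewrite divr_gt0.
  have -> : adj L i j - L i j = ((L - P) j i)^* + (P - L) i j.
    have Pij : P i j = (P j i)^* by rewrite -[in LHS]hP adjE.
    by rewrite !mxE rmorphB Pij; ring.
  apply: le_lt_trans (le_normcD _ _) _; rewrite normcJ.
  have := normc_le_l1norm (L - P) j i; have := normc_le_l1norm (P - L) i j.
  by rewrite -opprB l1normN; lra.
apply/ler_addgt0Pr => e e0.
have e1 : 0 < e / (vnorm2 v + 1) by rewrite divr_gt0 // ltr_wpDl ?vnorm2_ge0.
have [P hP LP] := hL _ e1.
rewrite -(subrK P L) sform_mxD ReD.
have := psd_Re_ge0 v hP; have := Re_le_normc (sform (L - P) v v).
have := normc_sform_le (L - P) v; have := vnorm2_ge0 v; have := l1norm_ge0 (L - P).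
have : e / (vnorm2 v + 1) * (vnorm2 v + 1) = e by rewrite divfK // lt0r_neq0 // ltr_wpDl ?vnorm2_ge0.
rewrite ler_norml; nra.
Qed.

Lemma density_approx L :
  (forall e, 0 < e -> exists2 P, density P & l1norm (L - P) < e) -> density L.
Proof.
move=> hL; split.
  by apply: psd_approx => e /hL [P [hP _] LP]; exists P.
apply/eqP; rewrite -subr_eq0; apply/eqP; apply: normc_small_eq0 => e /hL [P [_ trP] LP].
by rewrite -trP -linearB; apply: le_lt_trans (normc_mxtrace_le _) LP.
Qed.

End Densities.

Section PositiveDefinite.
Variable R : realType.
Local Notation C := R[i].
Variable n : nat.
Implicit Types (A E : 'M[C]_n) (v : 'cV[C]_n).

(* Cauchy-Schwarz for the form of [invmx A] at [A v] and [v]. *)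
Lemma psd_unit_coercive A v : psd A -> A \in unitmx ->
  vnorm2 v <= l1norm (invmx A) * complex.Re (sform A v v).
Proof.
move=> hA uA; have hB := psd_invmx hA uA.
have h1 : sform (invmx A) (A *m v) v = (vnorm2 v)%:C.
  by rewrite -sform1 /sform adjM hA.1 mulmx1 -(mulmxA _ A) mulmxV // mulmx1.
have h2 : sform (invmx A) (A *m v) (A *m v) = sform A v v.
  by rewrite /sform adjM hA.1 -!mulmxA (mulmxA (invmx A)) mulVmx // mul1mx.
have := psd_CauchySchwarz (A *m v) v hB; rewrite h1 h2 normc_real ger0_norm ?vnorm2_ge0 //.
have ReB_le : complex.Re (sform (invmx A) v v) <= l1norm (invmx A) * vnorm2 v.
  exact: le_trans (ler_norm _) (le_trans (Re_le_normc _) (normc_sform_le _ _)).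
have := psd_Re_ge0 v hA; have := vnorm2_ge0 v; have := l1norm_ge0 (invmx A).
move: ReB_le; set s := vnorm2 v; set r := complex.Re (sform A v v); set M := l1norm _.
move=> ReB_le M0 s0 r0 CS; have [->|s_neq0] := eqVneq s 0; first by rewrite mulr_ge0.
have s_gt0 : 0 < s by rewrite lt0r s_neq0.
nra.
Qed.

Lemma psd_add_small A E (K : R) : psd A -> adj E = E -> 0 <= K ->
  (forall v, vnorm2 v <= K * complex.Re (sform A v v)) -> K * l1norm E <= 1 ->
  psd (A + E).
Proof.
move=> hA hE K0 hK KE; apply: psdP => [|v]; first by rewrite adjD hA.1 hE.
rewrite sform_mxD ReD.
have := Re_le_normc (sform E v v); rewrite ler_norml => /andP[hE1 _].
have := normc_sform_le E v; have := hK v; have := psd_Re_ge0 v hA; have := l1norm_ge0 E.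
nra.
Qed.

Lemma psd_unit_interior A : psd A -> A \in unitmx ->
  exists2 d : R, 0 < d & forall E, adj E = E -> l1norm E <= d -> psd (A + E).
Proof.
move=> hA uA; set K := l1norm (invmx A) + 1.
have K_gt0 : 0 < K by rewrite ltr_wpDl ?l1norm_ge0.
exists K^-1; first by rewrite invr_gt0.
move=> E hE lE; apply: (psd_add_small hA hE (ltW K_gt0)).
  move=> v; apply: le_trans (psd_unit_coercive v hA uA) _.
  by rewrite ler_wpM2r ?psd_Re_ge0 // lerDl.
by rewrite -(mulfV (lt0r_neq0 K_gt0)) ler_wpM2l // ltW.
Qed.

End PositiveDefinite.

Section NearMaps.
Variable R : realType.
Local Notation C := R[i].
Variables n m : nat.
Implicit Types Psi Phi : {linear 'M[C]_n -> 'M[C]_m}.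

Lemma near_map_l1norm (eps : R) Psi Phi X : Defs.near_map eps Psi Phi ->
  l1norm (Phi X - Psi X) <= l1norm X * (eps *+ (n * n * (m * m))).
Proof.
move=> near; apply: le_trans (l1norm_linear_le (Phi \- Psi) X) _.
rewrite ler_wpM2l ?l1norm_ge0 //.
apply: le_trans (_ : \sum_(i < n) \sum_(j < n) eps *+ (m * m) <= _); last first.
  by rewrite !sumr_const !card_ord -!mulrnA mulnC.
do 2!apply: ler_sum => ? _; apply: l1norm_le_entry => k l.
by rewrite !mxE; apply: ltW; rewrite -ltcR -normcE.
Qed.

Lemma near_map_eval_l1norm (eps : R) Psi Phi X Y : Defs.near_map eps Psi Phi ->
  l1norm (Psi X - Phi Y) <=
  l1norm (X - Y) * \sum_i \sum_j l1norm (Psi (delta_mx i j)) +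
  l1norm Y * (eps *+ (n * n * (m * m))).
Proof.
move=> near; rewrite -(subrK (Psi Y) (Psi X)) -linearB /= -addrA.
apply: le_trans (l1normD _ _) _; apply: lerD; first exact: l1norm_linear_le.
by rewrite -opprB l1normN near_map_l1norm.
Qed.

End NearMaps.

Section Depolarization.
Variable R : realType.
Local Notation C := R[i].

Definition depolarize p (s : R) (P : 'M[C]_p) : 'M[C]_p :=
  ((1 + s)^-1)%:C *: (P + (s / p%:R)%:C *: 1%:M).

Lemma depolarize_density p s (P : 'M[C]_p) : 0 < s -> density P ->
  density (depolarize s P) /\ depolarize s P \in unitmx.
Proof.
move=> s0 dP; have p0 := density_dim_gt0 dP.
have i0 : 0 < (1 + s)^-1 by rewrite invr_gt0; lra.
have t0 : 0 < s / p%:R by rewrite divr_gt0 // ltr0n.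
split; last first.
  rewrite unitmxZ; first exact: psd_add_scalar_unit dP.1 t0.
  by rewrite unitfE (inj_eq (@complexI R)) lt0r_neq0.
split.
  rewrite /depolarize; apply: psdZ (ltW i0) _; apply: psdD dP.1 _.
  exact: psdZ (ltW t0) (psd1 _ _).
rewrite /depolarize linearZ linearD linearZ /= mxtrace1 dP.2.
rewrite -(rmorph_nat (real_complex R) p) -rmorphM -(rmorph1 (real_complex R)) -rmorphD -rmorphM.
by congr (_ %:C); field; rewrite pnatr_eq0 -lt0n p0 /=; lra.
Qed.

Variables n m : nat.
Implicit Types (Psi : {linear 'M[C]_n -> 'M[C]_m}) (c s : R) (D : 'M[C]_m).

Definition perturb Psi c D X := Psi X + (c%:C * \tr X) *: D.

Fact perturb_is_linear Psi c D : linear (perturb Psi c D).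
Proof.
move=> a X Y; rewrite /perturb linearP mxtraceD mxtraceZ.
rewrite mulrDr scalerDl mulrCA -scalerA scalerDr.
by rewrite [a *: (_ *: D)]scalerA addrACA.
Qed.

HB.instance Definition _ Psi c D :=
  GRing.isLinear.Build _ _ _ _ (perturb Psi c D) (perturb_is_linear Psi c D).

Lemma perturbE Psi c D X : perturb Psi c D X = Psi X + (c%:C * \tr X) *: D.
Proof. by []. Qed.

Lemma perturb_HP Psi c D : HP Psi -> adj D = D -> \tr D = 0 -> HP (perturb Psi c D).
Proof.
move=> [hP tP] hD tD; split => X /=; rewrite !perturbE.
  by rewrite hP adjD adjZ hD mxtrace_adj rmorphM /= conjC_realc.
by rewrite mxtraceD mxtraceZ tD mulr0 addr0.
Qed.

Lemma perturb_near (eps : R) Psi c D : `|c| * l1norm D < eps ->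
  Defs.near_map eps Psi (perturb Psi c D).
Proof.
move=> hc a b k l /=; rewrite normcE ltcR perturbE !mxE addrC addKr.
apply: le_lt_trans hc; rewrite !normcM normc_real -mulrA ler_wpM2l //.
have tr_le1 : normc (\tr (delta_mx a b : 'M[C]_n)) <= 1.
  rewrite /mxtrace (bigD1 a) //= big1 => [|i ia]; last by rewrite mxE (negPf ia).
  by rewrite mxE eqxx addr0; case: (a == b); rewrite ?normc1 ?normc0.
apply: le_trans (ler_wpM2r (normc_ge0 _) tr_le1) _.
by rewrite mul1r normc_le_l1norm.
Qed.

Lemma perturb_near_small (eps : R) Psi D : 0 < eps ->
  exists2 s : R, 0 < s & forall c, `|c| <= s -> Defs.near_map eps Psi (perturb Psi c D).
Proof.
move=> eps0; have D1 : 0 < l1norm D + 1 by rewrite ltr_wpDl ?l1norm_ge0.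
exists (eps / (l1norm D + 1)) => [|c cs]; first by rewrite divr_gt0.
apply: perturb_near; apply: le_lt_trans (ler_wpM2r (l1norm_ge0 D) cs) _.
by rewrite mulrAC ltr_pdivrMr // ltr_pM2l // ltrDl.
Qed.

Definition unitality_defect Psi : 'M[C]_m :=
  n%:R^-1 *: Psi 1%:M - m%:R^-1 *: 1%:M.

Lemma unitality_defect_adj Psi : HP Psi -> adj (unitality_defect Psi) = unitality_defect Psi.
Proof.
move=> [hP _]; rewrite /unitality_defect adjD adjN !adjZ -hP.
by rewrite !adj_scalar !fmorphV /= !conjC_nat conjC1.
Qed.

Lemma unitality_defect_tr Psi : HP Psi -> (0 < n)%N -> (0 < m)%N ->
  \tr (unitality_defect Psi) = 0.
Proof.
move=> [_ tP] n0 m0; rewrite /unitality_defect linearB /= !mxtraceZ tP !mxtrace1.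
by rewrite !mulVf ?subrr // pnatr_eq0 -lt0n.
Qed.

Lemma map_depolarize Psi s rho : \tr rho = 1 ->
  Psi (depolarize s rho) = depolarize s (perturb Psi s (unitality_defect Psi) rho).
Proof.
move=> tr1; rewrite /depolarize perturbE /unitality_defect tr1 mulr1 !linearZ linearD linearZ /=.
rewrite !rmorphM /= !fmorphV /= !rmorph_nat; apply/matrixP => i j; rewrite !mxE; ring.
Qed.

Lemma perturb_depolarize Psi s rho : \tr (depolarize s rho) = 1 ->
  perturb Psi (- (s / (1 + s))) (unitality_defect Psi) (depolarize s rho) =
  depolarize s (Psi rho).
Proof.
move=> tr1; rewrite perturbE tr1 mulr1 /depolarize /unitality_defect rmorphN.
rewrite !linearZ linearD linearZ /= !rmorphM /= !fmorphV /= !rmorph_nat.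
apply/matrixP => i j; rewrite !mxE; ring.
Qed.

End Depolarization.

Section Compactness.
Variable R : realType.
Local Notation C := R[i].
Local Open Scope classical_set_scope.

Lemma increasing_seq_ge (f : nat -> nat) : increasing_seq f -> forall k, (k <= f k)%N.
Proof.
move=> /increasing_seqP f_incr; elim=> // k IHk.
exact: leq_ltn_trans IHk (f_incr k).
Qed.

Lemma cvgn_subseq (u : R^nat) (f : nat -> nat) : increasing_seq f -> cvgn u -> cvgn (u \o f).
Proof.
move=> /increasing_seq_ge f_ge /cvg_ex[l ul]; apply/cvg_ex; exists l.
apply: cvg_comp ul => P [N _ hP]; exists N => // k /= Nk.
exact/hP/(leq_trans Nk (f_ge k)).
Qed.

Lemma bounded_seqs_common_cvg (I : finType) (u : I -> R^nat) (B : R) :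
  (forall i k, `|u i k| <= B) ->
  exists2 g : nat -> nat, increasing_seq g & forall i, cvgn (u i \o g).
Proof.
move=> uB; suff [g g_incr g_cvg] : exists2 g : nat -> nat, increasing_seq g &
    forall i, i \in enum I -> cvgn (u i \o g).
  by exists g => // i; apply: g_cvg; rewrite mem_enum.
elim: (enum I) => [|x s [g g_incr g_cvg]]; first by exists id.
have bnd : bounded_fun (u x \o g).
  exists B; split; first exact: num_real.
  by move=> M BM k _ /=; apply: le_trans (uB _ _) (ltW BM).
have [f f_incr fx_cvg] := bolzano_weierstrass bnd.
exists (g \o f) => [m p|i]; first by rewrite /= g_incr; exact: f_incr.
rewrite in_cons => /predU1P[-> //|i_s].
exact: cvgn_subseq f_incr (g_cvg i i_s).
Qed.

Definition mx_cluster p q (X : nat -> 'M[C]_(p, q)) (L : 'M[C]_(p, q)) :=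
  forall (P : nat -> Prop) (e : R), (\forall k \near \oo, P k) -> 0 < e ->
    exists k, P k /\ l1norm (X k - L) < e.

(* Bolzano-Weierstrass on the real and imaginary parts of the entries. *)
Lemma bounded_mx_seq_cluster p q (X : nat -> 'M[C]_(p, q)) (B : R) :
  (forall k i j, normc (X k i j) <= B) -> exists L, mx_cluster X L.
Proof.
move=> XB; pose u (x : 'I_p * 'I_q * bool) k :=
  let: (i, j, b) := x in if b then complex.Re (X k i j) else complex.Im (X k i j).
have uB x k : `|u x k| <= B.
  case: x => [[i j] []]; apply: le_trans (XB k i j).
    exact: Re_le_normc.
  exact: Im_le_normc.
have [g g_incr g_cvg] := bounded_seqs_common_cvg uB.
pose l x := limn (u x \o g).
exists (\matrix_(i, j) (l (i, j, true) +i* l (i, j, false))%C) => P e P_ev e0.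
set d := e / (2 * (p * q)%:R + 1).
have d0 : 0 < d by rewrite divr_gt0 // ltr_wpDl ?mulr_ge0.
have near_l : \forall k \near \oo, forall x, `|l x - u x (g k)| < d.
  by apply: filter_forall => x; exact: (cvgrPdist_lt _ _).1 (g_cvg x) d d0.
have near_P : \forall k \near \oo, P (g k).
  case: P_ev => N _ hP; exists N => // k /= Nk.
  exact/hP/(leq_trans Nk (increasing_seq_ge g_incr k)).
have [k [lk Pk]] := filter_ex ((near_andP _ _ _).2 (conj near_l near_P)).
exists (g k); split => //.
apply: le_lt_trans (_ : l1norm _ <= (2 * d) *+ (p * q)) _.
  apply: l1norm_le_entry => i j; rewrite !mxE.
  apply: le_trans (normc_le_ReIm _) _.
  have := lk (i, j, true); have := lk (i, j, false); rewrite /u /=.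
  case: (X (g k) i j) => a b /= hb ha; rewrite mulr2n mulrDl mul1r.
  by apply: lerD; rewrite distrC ltW.
rewrite -mulr_natr (_ : 2 * d * (p * q)%:R = e - d); first by lra.
by rewrite /d; field; rewrite lt0r_neq0 // ltr_wpDl ?mulr_ge0.
Qed.

End Compactness.

Section InteriorAndClosure.
Variable R : realType.
Local Notation C := R[i].
Variables n m : nat.
Implicit Type Psi : {linear 'M[C]_n -> 'M[C]_m}.

Lemma interior_SN_SP Psi : interior_HP (@SN R n m) Psi -> SP Psi.
Proof.
move=> [hP [[_ [rho0 [d0 dP0]]] [eps [eps0 near_SN]]]].
have n0 := density_dim_gt0 d0; have m0 := density_dim_gt0 dP0.
set D := unitality_defect Psi.
have [s s0 near_s] := perturb_near_small Psi D eps0.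
have [_ [rho [drho dPhi]]] : SN (perturb Psi s D).
  apply: near_SN; last by apply: near_s; rewrite gtr0_norm.
  exact: perturb_HP hP (unitality_defect_adj hP) (unitality_defect_tr hP n0 m0).
have [d1 u1] := depolarize_density s0 drho.
have [d2 u2] := depolarize_density s0 dPhi.
by split => //; exists (depolarize s rho); rewrite map_depolarize ?drho.2.
Qed.

Lemma SN_closure_SP Psi : SN Psi -> closure_HP (@SP R n m) Psi.
Proof.
move=> [hP [rho [drho dPsi]]]; split => // eps eps0.
have n0 := density_dim_gt0 drho; have m0 := density_dim_gt0 dPsi.
set D := unitality_defect Psi.
have [s s0 near_s] := perturb_near_small Psi D eps0.
have hPhi : HP (perturb Psi (- (s / (1 + s))) D).
  exact: perturb_HP hP (unitality_defect_adj hP) (unitality_defect_tr hP n0 m0).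
exists (perturb Psi (- (s / (1 + s))) D); split; last split => //.
  have [d1 u1] := depolarize_density s0 drho.
  have [d2 u2] := depolarize_density s0 dPsi.
  by split => //; exists (depolarize s rho); rewrite /= perturb_depolarize ?d1.2.
apply: near_s; rewrite normrN ger0_norm ?divr_ge0 ?ler_pdivrMr ?ltr_wpDl //; try lra.
by rewrite mulrDr mulr1 lerDl mulr_ge0 // ltW.
Qed.

Lemma SP_interior_SN Psi : SP Psi -> interior_HP (@SN R n m) Psi.
Proof.
move=> [hP [rho [drho urho dA uA]]].
split => //; split; first by split => //; exists rho.
have [d d0 psd_near] := psd_unit_interior dA.1 uA.
set K := l1norm rho *+ (n * n * (m * m)) + 1.
have K0 : 0 < K by rewrite ltr_wpDl ?mulrn_wge0 ?l1norm_ge0.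
exists (d / K); split => [|Phi hPhi near]; first by rewrite divr_gt0.
split => //; exists rho; split => //; split; last by rewrite hPhi.2 drho.2.
rewrite -(subrK (Psi rho) (Phi rho)) addrC; apply: psd_near.
  by rewrite adjD adjN -hPhi.1 -hP.1 drho.1.1.
apply: le_trans (near_map_l1norm rho near) _.
rewrite mulrnAr mulrC -mulrnAr; apply: (@le_trans _ _ (d / K * K)).
  by rewrite ler_wpM2l ?divr_ge0 ?(ltW d0) ?(ltW K0) // /K lerDl.
by rewrite divfK ?lt0r_neq0.
Qed.

Lemma mx_cluster_eval Psi (Phi_ : nat -> {linear 'M[C]_n -> 'M[C]_m}) rho_ L (b : R) :
  (forall k, Defs.near_map k.+1%:R^-1 Psi (Phi_ k)) -> (forall k, l1norm (rho_ k) <= b) ->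
  mx_cluster rho_ L -> forall e, 0 < e -> exists k, l1norm (Psi L - Phi_ k (rho_ k)) < e.
Proof.
move=> near_k rho_le L_cluster e e0.
pose KPsi := \sum_i \sum_j l1norm (Psi (delta_mx i j)).
pose Kb : R := b * (n * n * (m * m))%:R.
have KPsi0 : 0 <= KPsi by do 2!apply: sumr_ge0 => ? _; exact: l1norm_ge0.
have Kb0 : 0 <= Kb by rewrite mulr_ge0 // (le_trans (l1norm_ge0 _) (rho_le 0%N)).
have t0 : 0 < e / (2 * (KPsi + Kb + 1)) by rewrite divr_gt0 // mulr_gt0 // ltr_wpDl ?addr_ge0.
set t := e / (2 * (KPsi + Kb + 1)) in t0.
have [k [kt Lk]] := L_cluster _ t (near_infty_natSinv_lt (PosNum t0)) t0.
exists k; apply: le_lt_trans (near_map_eval_l1norm L (rho_ k) (near_k k)) _.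
rewrite -opprB l1normN -/KPsi.
have h1 : l1norm (rho_ k - L) * KPsi <= t * KPsi by rewrite ler_wpM2r // ltW.
have h2 : l1norm (rho_ k) * (k.+1%:R^-1 *+ (n * n * (m * m))) <= t * Kb.
  rewrite -[_^-1 *+ _]mulr_natr; apply: le_trans (ler_wpM2r _ (rho_le k)) _.
    by rewrite mulr_ge0 ?invr_ge0.
  by rewrite mulrCA ler_wpM2r //; exact: ltW kt.
have te : e = 2 * (t * KPsi) + 2 * (t * Kb) + 2 * t.
  by rewrite /t; field; rewrite lt0r_neq0 // ltr_wpDl ?addr_ge0.
apply: le_lt_trans (lerD h1 h2) _.
have := mulr_ge0 (ltW t0) KPsi0; have := mulr_ge0 (ltW t0) Kb0; lra.
Qed.

Lemma closure_SP_SN Psi : closure_HP (@SP R n m) Psi -> SN Psi.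
Proof.
move=> [hP near_SP]; split => //.
have approx_k k : exists Phi : {linear 'M[C]_n -> 'M[C]_m}, exists rho,
    [/\ Defs.near_map k.+1%:R^-1 Psi Phi, density rho & density (Phi rho)].
  have /near_SP[Phi [[_ [rho [dr _ dPr _]]] [_ near]]] : 0 < k.+1%:R^-1 :> R.
    by rewrite invr_gt0.
  by exists Phi, rho.
have [Phi_ /choice[rho_ h_]] := choice approx_k.
have near_k k : Defs.near_map k.+1%:R^-1 Psi (Phi_ k) by case: (h_ k).
have dr k : density (rho_ k) by case: (h_ k).
have dPr k : density (Phi_ k (rho_ k)) by case: (h_ k).
have [L L_cluster] := bounded_mx_seq_cluster (fun k i j => density_entry_le1 i j (dr k)).
have rho_le k : l1norm (rho_ k) <= (n * n)%:R.
  by rewrite -[_%:R]mul1r mulr_natr l1norm_le_entry // => i j; exact: density_entry_le1 (dr k).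
exists L; split; apply: density_approx => e e0.
  have [k [_ Lk]] := L_cluster (fun=> True) e filterT e0.
  by exists (rho_ k); [exact: dr | rewrite -opprB l1normN].
have [k Lk] := mx_cluster_eval near_k rho_le L_cluster e0.
by exists (Phi_ k (rho_ k)).
Qed.

End InteriorAndClosure.

Theorem theorem4 (R : realType) (n m : nat) :
  (forall Psi : {linear 'M[R[i]]_n -> 'M[R[i]]_m},
      interior_HP (@SN R n m) Psi <-> SP Psi) /\
  (forall Psi : {linear 'M[R[i]]_n -> 'M[R[i]]_m},
      closure_HP (@SP R n m) Psi <-> SN Psi).
Proof.
split=> Psi; split.
- exact: interior_SN_SP.
- exact: SP_interior_SN.
- exact: closure_SP_SN.
- exact: SN_closure_SP.
Qed.
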